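(* Let $G$ be a solvable group equipped with a purely positive length function, and let $A$ be a maximal abelian normal subgroup of $G$. Assume that $A$ is torsion-free. Then $C_{G}(A)=A$, where $C_G(A)$ is the centralizer of $A$ in $G$.
   Context: A length function on a group $G$ is a function $l:G\to[0,\infty)$ such that $l(g^{n})=|n|\,l(g)$ for all $g\in G,n\in\mathbb{Z}$; $l(hgh^{-1})=l(g)$ for all $g,h$; and $l(ab)\leq l(a)+l(b)$ whenever $a,b$ commute. It is purely positive if $l(g)>0$ for every element of infinite order. *)

From Stdlib Require Import Reals ZArith.
Open Scope R_scope.

Record Group := {
  carrier :> Type;
  gmul : carrier -> carrier -> carrier;
  ginv : carrier -> carrier;
  gone : carrier;
  gmulA : forall x y z, gmul x (gmul y z) = gmul (gmul x y) z;
  gmul1 : forall x, gmul gone x = x;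
  gmulV : forall x, gmul (ginv x) x = gone
}.

Arguments gmul {g}.
Arguments ginv {g}.
Arguments gone {g}.

Section Defs.
Variable G : Group.

Definition subset (A B : G -> Prop) : Prop := forall x, A x -> B x.

Definition is_subgroup (H : G -> Prop) : Prop :=
  H gone /\ (forall x y, H x -> H y -> H (gmul x y)) /\ (forall x, H x -> H (ginv x)).

Definition conj (g x : G) : G := gmul (gmul g x) (ginv g).

Definition is_normal (H : G -> Prop) : Prop :=
  is_subgroup H /\ forall g x, H x -> H (conj g x).

Definition is_abelian (H : G -> Prop) : Prop :=
  forall x y, H x -> H y -> gmul x y = gmul y x.

Definition max_abelian_normal (A : G -> Prop) : Prop :=
  is_normal A /\ is_abelian A /\
  forall B, is_normal B -> is_abelian B -> subset A B -> subset B A.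

Definition centralizer (A : G -> Prop) : G -> Prop :=
  fun g => forall a, A a -> gmul g a = gmul a g.

Definition generated (S : G -> Prop) : G -> Prop :=
  fun x => forall H, is_subgroup H -> subset S H -> H x.

Definition commutator (x y : G) : G := gmul (gmul (ginv x) (ginv y)) (gmul x y).

Definition derived_sub (H : G -> Prop) : G -> Prop :=
  generated (fun z => exists x y, H x /\ H y /\ z = commutator x y).

Fixpoint derived (n : nat) : G -> Prop :=
  match n with
  | O => fun _ => True
  | S m => derived_sub (derived m)
  end.

Definition solvable : Prop := exists n, forall x, derived n x -> x = gone.

Fixpoint npow (n : nat) (g : G) : G :=
  match n with
  | O => gone
  | S m => gmul g (npow m g)
  end.

Definition zpow (n : Z) (g : G) : G :=
  match n with
  | Z0 => gone
  | Zpos p => npow (Pos.to_nat p) g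
  | Zneg p => ginv (npow (Pos.to_nat p) g)
  end.

Definition infinite_order (g : G) : Prop := forall n : nat, (0 < n)%nat -> npow n g <> gone.

Definition torsion_free (A : G -> Prop) : Prop :=
  forall a, A a -> a <> gone -> infinite_order a.

Definition length_function (l : G -> R) : Prop :=
  (forall g, 0 <= l g) /\
  (forall g (n : Z), l (zpow n g) = IZR (Z.abs n) * l g) /\
  (forall g h, l (conj h g) = l g) /\
  (forall a b, gmul a b = gmul b a -> l (gmul a b) <= l a + l b).

Definition purely_positive (l : G -> R) : Prop :=
  forall g, infinite_order g -> 0 < l g.

End Defs.

Arguments is_subgroup {G}. Arguments is_normal {G}. Arguments is_abelian {G}.
Arguments max_abelian_normal {G}. Arguments centralizer {G}.
Arguments torsion_free {G}. Arguments length_function {G}.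
Arguments purely_positive {G}. Arguments conj {G}. Arguments subset {G}.

(* Let C be the centralizer of A; since A is normal, so is C. Put
   D_m := C ∩ A·G^(m), with G^(m) the derived series. As G is solvable,
   D_N ⊆ A for N large. If D_(m+1) ⊆ A, any x, y ∈ D_m have their commutator
   c = [x, y] in D_(m+1) ⊆ A, so c commutes with x and y; then
   y^-k x y^k = x c^k, hence k l(c) = l(c^k) <= l(x^-1) + l(x c^k) = 2 l(x) for
   every k, so l(c) = 0. Pure positivity and torsion-freeness of A force c = 1.
   Thus D_m is an abelian normal subgroup containing A, and maximality gives
   D_m ⊆ A. Descending to m = 0 yields C = D_0 ⊆ A. *)

From Stdlib Require Import Reals ZArith Lia Lra Classical.

Local Notation "x ** y" := (gmul x y) (at level 40, left associativity).

Section GroupLaws.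
Context {G : Group}.
Implicit Types x y z : G.

Lemma mulgAr x y z : x ** y ** z = x ** (y ** z).
Proof. symmetry; apply gmulA. Qed.

Lemma mulgV x : x ** ginv x = gone.
Proof.
  transitivity (ginv (ginv x) ** ginv x ** (x ** ginv x)).
  - rewrite gmulV, gmul1. reflexivity.
  - rewrite mulgAr, (gmulA G (ginv x) x), gmulV, gmul1. apply gmulV.
Qed.

Lemma mulg1 x : x ** gone = x.
Proof. rewrite <- (gmulV G x), gmulA, mulgV. apply gmul1. Qed.

Lemma mulKg x y : ginv x ** (x ** y) = y.
Proof. rewrite gmulA, gmulV. apply gmul1. Qed.

Lemma mulKVg x y : x ** (ginv x ** y) = y.
Proof. rewrite gmulA, mulgV. apply gmul1. Qed.

Lemma mulgI x y z : z ** x = z ** y -> x = y.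
Proof. intro e. rewrite <- (mulKg z x), e. apply mulKg. Qed.

Lemma mulIg x y z : x ** z = y ** z -> x = y.
Proof.
  intro e. rewrite <- (mulg1 x), <- (mulgV z), gmulA, e, mulgAr, mulgV.
  apply mulg1.
Qed.

Lemma invgK x : ginv (ginv x) = x.
Proof. apply (mulIg _ _ (ginv x)). rewrite gmulV, mulgV. reflexivity. Qed.

Lemma invMg x y : ginv (x ** y) = ginv y ** ginv x.
Proof.
  apply (mulgI _ _ (x ** y)). rewrite mulgV, mulgAr, mulKVg, mulgV. reflexivity.
Qed.

Lemma invg1 : ginv (@gone G) = gone.
Proof. rewrite <- (mulg1 (ginv gone)). apply gmulV. Qed.

End GroupLaws.

Ltac gsimpl := repeat rewrite ?mulgAr, ?gmul1, ?mulg1, ?gmulV, ?mulgV, ?mulKg,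
  ?mulKVg, ?invgK, ?invMg, ?invg1.

Tactic Notation "gsimpl" "in" hyp(h) := repeat rewrite ?mulgAr, ?gmul1, ?mulg1,
  ?gmulV, ?mulgV, ?mulKg, ?mulKVg, ?invgK, ?invMg, ?invg1 in h.

Section Conjugation.
Context {G : Group}.
Implicit Types g x y : G.

Lemma conjM g x y : conj g (x ** y) = conj g x ** conj g y.
Proof. unfold conj. gsimpl. reflexivity. Qed.

Lemma conjV g x : conj g (ginv x) = ginv (conj g x).
Proof. unfold conj. gsimpl. reflexivity. Qed.

Lemma conj1 g : conj g gone = gone.
Proof. unfold conj. gsimpl. reflexivity. Qed.

Lemma conjgM g h x : conj (g ** h) x = conj g (conj h x).
Proof. unfold conj. gsimpl. reflexivity. Qed.

Lemma conj_commutator g x y :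
  conj g (commutator G x y) = commutator G (conj g x) (conj g y).
Proof. unfold commutator, conj. gsimpl. reflexivity. Qed.

Lemma commutatorP x y : x ** y = y ** x ** commutator G x y.
Proof. unfold commutator. gsimpl. reflexivity. Qed.

Lemma commute_inv x y : x ** y = y ** x -> ginv x ** y = y ** ginv x.
Proof.
  intro e. apply (mulgI _ _ x), (mulIg _ _ x). gsimpl. symmetry. exact e.
Qed.

Lemma commute_npow x y m : x ** y = y ** x -> x ** npow G m y = npow G m y ** x.
Proof.
  intro e. induction m as [|m IH]; simpl.
  - gsimpl. reflexivity.
  - rewrite gmulA, e, mulgAr, IH. gsimpl. reflexivity.
Qed.

Lemma conj_npow_commutator x y m :
  y ** commutator G x y = commutator G x y ** y ->
  conj (npow G m (ginv y)) x = x ** npow G m (commutator G x y).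
Proof.
  intro ecy. pose proof (commute_inv _ _ ecy) as ecy'.
  induction m as [|m IH]; simpl.
  - unfold conj. gsimpl. reflexivity.
  - rewrite conjgM, IH, conjM.
    replace (conj (ginv y) x) with (x ** commutator G x y)
      by (unfold conj, commutator; gsimpl; reflexivity).
    unfold conj at 1. rewrite (commute_npow _ _ m ecy'). gsimpl. reflexivity.
Qed.

End Conjugation.

Section Subgroups.
Variable G : Group.
Implicit Types (H K A : G -> Prop) (x y : G).

Lemma subgroup_commutator H x y :
  is_subgroup H -> H x -> H y -> H (commutator G x y).
Proof. intros [_ [hM hV]] hx hy. unfold commutator. auto. Qed.

Lemma normal_setI H K :
  is_normal H -> is_normal K -> is_normal (fun x => H x /\ K x).
Proof.
  intros [[h1 [hM hV]] hJ] [[k1 [kM kV]] kJ].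
  split; [split; [|split]|]; intuition.
Qed.

Lemma generated_subgroup S : is_subgroup (generated G S).
Proof.
  split; [|split].
  - intros H [h1 _] _. exact h1.
  - intros x y hx hy H hH hS. pose proof hH as [_ [hM _]].
    apply hM; [apply hx | apply hy]; auto.
  - intros x hx H hH hS. pose proof hH as [_ [_ hV]].
    apply hV, hx; auto.
Qed.

Lemma mem_generated S x : S x -> generated G S x.
Proof. intros hx H _ hS. apply hS, hx. Qed.

Lemma generated_conj_closed S :
  (forall g s, S s -> S (conj g s)) ->
  forall g x, generated G S x -> generated G S (conj g x).
Proof.
  intros hS g x hx H [h1 [hM hV]] hSH.
  apply (hx (fun y => H (conj g y))).
  - split; [|split].
    + rewrite conj1. exact h1.
    + intros a b ha hb. rewrite conjM. auto.
    + intros a ha. rewrite conjV. auto.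
  - intros s hs. apply hSH, hS, hs.
Qed.

Lemma derived_sub_normal K : is_normal K -> is_normal (derived_sub G K).
Proof.
  intros [_ hK]. split; [apply generated_subgroup|].
  apply generated_conj_closed. intros g s [x [y [hx [hy ->]]]].
  exists (conj g x), (conj g y). rewrite conj_commutator. auto.
Qed.

Lemma derived_normal n : is_normal (derived G n).
Proof.
  induction n as [|n IH].
  - split; [split; [|split]|]; simpl; auto.
  - apply derived_sub_normal, IH.
Qed.

Lemma centralizer_subgroup A : is_subgroup (centralizer A).
Proof.
  unfold centralizer. split; [|split].
  - intros a _. gsimpl. reflexivity.
  - intros x y hx hy a ha. rewrite mulgAr, hy, gmulA, hx by exact ha.
    gsimpl. reflexivity.
  - intros x hx a ha. apply commute_inv, hx, ha.
Qed.

Lemma centralizer_normal A : is_normal A -> is_normal (centralizer A).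
Proof.
  intros [_ hA]. split; [apply centralizer_subgroup|].
  intros g x hx a ha.
  pose proof (hx (conj (ginv g) a) (hA _ _ ha)) as e. unfold conj in *.
  apply (mulgI _ _ (ginv g)), (mulIg _ _ g). gsimpl. gsimpl in e. exact e.
Qed.

Lemma abelian_sub_centralizer A : is_abelian A -> subset A (centralizer A).
Proof. intros hab a ha b hb. apply hab; assumption. Qed.

End Subgroups.

Section Product.
Variables (G : Group) (A : G -> Prop).
Hypothesis hA : is_normal A.
Implicit Types (K : G -> Prop) (x y : G).

Definition eqmod x y : Prop := A (x ** ginv y).

(* The product set A·K, read as the union of the cosets of A meeting K. *)
Definition prod_set K : G -> Prop := fun x => exists k, K k /\ eqmod x k.

Lemma eqmodM x x' y y' :
  eqmod x x' -> eqmod y y' -> eqmod (x ** y) (x' ** y').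
Proof.
  destruct hA as [[_ [hM _]] hJ]. unfold eqmod. intros hx hy.
  replace (x ** y ** ginv (x' ** y')) with (conj x (y ** ginv y') ** (x ** ginv x'))
    by (unfold conj; gsimpl; reflexivity).
  auto.
Qed.

Lemma eqmodV x x' : eqmod x x' -> eqmod (ginv x) (ginv x').
Proof.
  destruct hA as [[_ [_ hV]] hJ]. unfold eqmod. intro hx.
  replace (ginv x ** ginv (ginv x')) with (conj (ginv x) (ginv (x ** ginv x')))
    by (unfold conj; gsimpl; reflexivity).
  auto.
Qed.

Lemma eqmod_commutator x x' y y' :
  eqmod x x' -> eqmod y y' -> eqmod (commutator G x y) (commutator G x' y').
Proof.
  intros hx hy. unfold commutator.
  auto using eqmodM, eqmodV.
Qed.

Lemma prod_set_normal K : is_normal K -> is_normal (prod_set K).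
Proof.
  intros [[k1 [kM kV]] kJ]. destruct hA as [[a1 _] aJ].
  split; [split; [|split]|].
  - exists gone. split; [exact k1|]. unfold eqmod. gsimpl. exact a1.
  - intros x y [k [hk hx]] [k' [hk' hy]]. exists (k ** k'). auto using eqmodM.
  - intros x [k [hk hx]]. exists (ginv k). auto using eqmodV.
  - intros g x [k [hk hx]]. exists (conj g k). split; [auto|].
    unfold eqmod. rewrite <- conjV, <- conjM. auto.
Qed.

Lemma prod_set_l K : K gone -> subset A (prod_set K).
Proof. intros k1 a ha. exists gone. split; [exact k1|]. unfold eqmod. gsimpl. exact ha. Qed.

Lemma prod_setT x : prod_set (fun _ => True) x.
Proof.
  destruct hA as [[a1 _] _]. exists x. split; [exact I|].
  unfold eqmod. gsimpl. exact a1.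
Qed.

Lemma prod_set_trivial K : (forall k, K k -> k = gone) -> subset (prod_set K) A.
Proof.
  intros hK x [k [hk hx]]. unfold eqmod in hx.
  rewrite (hK k hk), invg1, mulg1 in hx. exact hx.
Qed.

Lemma prod_set_commutator K x y :
  prod_set K x -> prod_set K y -> prod_set (derived_sub G K) (commutator G x y).
Proof.
  intros [k [hk hx]] [k' [hk' hy]]. exists (commutator G k k'). split.
  - apply mem_generated. exists k, k'. auto.
  - apply eqmod_commutator; assumption.
Qed.

End Product.

Lemma Rle0_of_bounded_multiples (a b : R) : (forall n, INR n * a <= b) -> a <= 0.
Proof.
  intro hb. apply Rnot_lt_le. intro ha.
  destruct (INR_unbounded (b / a)) as [n hn].
  pose proof (hb n) as hn'.
  assert (b / a * a < INR n * a) by (apply Rmult_lt_compat_r; lra).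
  replace (b / a * a) with b in * by (field; lra).
  lra.
Qed.

Section LengthFunction.
Variables (G : Group) (l : G -> R).
Hypothesis hl : length_function l.

Lemma length_npow m g : l (npow G m g) = INR m * l g.
Proof.
  destruct hl as [_ [hZ _]].
  assert (e : zpow G (Z.of_nat m) g = npow G m g).
  { destruct m as [|m]; [reflexivity|]. simpl. rewrite SuccNat2Pos.id_succ. reflexivity. }
  rewrite <- e, hZ, INR_IZR_INZ. f_equal. f_equal. lia.
Qed.

Lemma length_inv g : l (ginv g) = l g.
Proof.
  destruct hl as [_ [hZ _]].
  pose proof (hZ g (-1)%Z) as e. simpl in e. rewrite mulg1 in e.
  rewrite e. lra.
Qed.

Lemma length_commutator_central x y :
  x ** commutator G x y = commutator G x y ** x ->
  y ** commutator G x y = commutator G x y ** y ->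
  l (commutator G x y) = 0.
Proof.
  set (c := commutator G x y). intros hcx hcy.
  destruct hl as [hpos [_ [hJ hsub]]].
  apply Rle_antisym; [|apply hpos].
  apply (Rle0_of_bounded_multiples _ (2 * l x)). intro m.
  assert (ecomm : ginv x ** (x ** npow G m c) = x ** npow G m c ** ginv x).
  { gsimpl. rewrite gmulA, (commute_npow _ _ m hcx). gsimpl. reflexivity. }
  assert (hconj : l (x ** npow G m c) = l x).
  { unfold c. rewrite <- conj_npow_commutator by exact hcy. apply hJ. }
  rewrite <- length_npow, <- (mulKg x (npow G m c)).
  pose proof (hsub _ _ ecomm). rewrite length_inv in *. lra.
Qed.

Lemma commute_of_commutator_torsion_free (A : G -> Prop) x y :
  purely_positive l -> torsion_free A ->
  centralizer A x -> centralizer A y -> A (commutator G x y) ->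
  x ** y = y ** x.
Proof.
  intros hpp htf hx hy hc.
  destruct (classic (commutator G x y = gone)) as [e|ne].
  - rewrite commutatorP, e, mulg1. reflexivity.
  - exfalso.
    pose proof (hpp _ (htf _ hc ne)) as hpos.
    rewrite (length_commutator_central x y (hx _ hc) (hy _ hc)) in hpos.
    lra.
Qed.

End LengthFunction.

Section MaximalAbelianNormal.
Variables (G : Group) (l : G -> R) (A : G -> Prop).
Hypotheses (hl : length_function l) (hpp : purely_positive l)
  (hmax : max_abelian_normal A) (htf : torsion_free A).

Let D m : G -> Prop := fun x => centralizer A x /\ prod_set G A (derived G m) x.

Lemma centralizer_prod_derived_step m : subset (D (S m)) A -> subset (D m) A.
Proof.
  destruct hmax as [hA [hab hmaxA]]. intro hDS.
  apply hmaxA.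
  - apply normal_setI.
    + apply centralizer_normal, hA.
    + apply prod_set_normal, derived_normal; exact hA.
  - intros x y [hx ex] [hy ey].
    apply (commute_of_commutator_torsion_free G l hl A); auto.
    apply hDS. split.
    + apply subgroup_commutator; [apply centralizer_subgroup | exact hx | exact hy].
    + apply prod_set_commutator; assumption.
  - intros a ha. split.
    + apply abelian_sub_centralizer; assumption.
    + exact (prod_set_l G A _ (proj1 (proj1 (derived_normal G m))) a ha).
Qed.

Lemma solvable_centralizer_sub N :
  (forall x, derived G N x -> x = gone) -> subset (centralizer A) A.
Proof.
  intro hN.
  assert (hdown : forall k, subset (D (N - k)%nat) A).
  { induction k as [|k IH].
    - rewrite Nat.sub_0_r. intros x [_ hx].
      exact (prod_set_trivial G A _ hN x hx).
    - destruct (Nat.lt_ge_cases k N) as [lt|ge].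
      + apply centralizer_prod_derived_step.
        replace (S (N - S k)) with (N - k)%nat by lia. exact IH.
      + replace (N - S k)%nat with (N - k)%nat by lia. exact IH. }
  intros x hx. apply (hdown N). rewrite Nat.sub_diag.
  split; [exact hx | apply prod_setT, hmax].
Qed.

End MaximalAbelianNormal.

Theorem lemma16 (G : Group) (l : G -> R) (A : G -> Prop) :
  solvable G ->
  length_function l -> purely_positive l ->
  max_abelian_normal A -> torsion_free A ->
  forall g : G, centralizer A g <-> A g.
Proof.
  intros [N hN] hl hpp hmax htf g. split.
  - apply (solvable_centralizer_sub G l A hl hpp hmax htf N hN).
  - apply abelian_sub_centralizer, hmax.
Qed.
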